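(* Let $X\in\mathbb{C}$ be an imaginary quadratic algebraic number such that $X$ is an $\mathbb{S}[\pm1]$-generator of the subring $\mathbb{Z}[X]\subset\mathbb{C}$, i.e. every element of $\mathbb{Z}[X]$ can be written uniquely as a finite sum $\sum_j\alpha_jX^j$ with $\alpha_j\in\{-1,0,1\}$. Then $\mathbb{Q}(X)$ is one of $\mathbb{Q}(\sqrt{-2})$, $\mathbb{Q}(\sqrt{-3})$, $\mathbb{Q}(\sqrt{-11})$. Moreover all three occur: $1+\sqrt{-2}$ is an $\mathbb{S}[\pm1]$-generator of $\mathbb{Z}[\sqrt{-2}]$ (the ring of integers of $\mathbb{Q}(\sqrt{-2})$), $\sqrt{-3}$ is an $\mathbb{S}[\pm1]$-generator of $\mathbb{Z}[\sqrt{-3}]$, and $\frac12(1+\sqrt{-11})$ is an $\mathbb{S}[\pm1]$-generator of the ring of integers of $\mathbb{Q}(\sqrt{-11})$.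
   Context: $\mathbb{S}[\pm1]=\mathbb{S}[\mu_{2,+}]$ with $\mu_2=\{\pm1\}$; an $\mathbb{S}[\pm1]$-generator of a ring $A\supset\{\pm1\}$ is $X\in A$ such that each element of $A$ is uniquely a finite sum $\sum_j\alpha_jX^j$, $\alpha_j\in\{-1,0,1\}$. *)

From HB Require Import structures.
From mathcomp Require Import all_boot all_order all_algebra all_field.
Set Implicit Arguments. Unset Strict Implicit. Unset Printing Implicit Defensive.
Import Order.TTheory GRing.Theory Num.Theory.
Local Open Scope ring_scope.

(* Complex numbers: algC (algebraic closure of Q, which contains all
   algebraic complex numbers). *)

Definition zev (p : {poly int}) (x : algC) : algC := (map_poly intr p).[x].

Definition Zadj (x : algC) (z : algC) : Prop := exists p : {poly int}, z = zev p x.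

Definition Qadj (x : algC) (z : algC) : Prop :=
  exists p q : {poly rat}, (map_poly ratr q).[x] != 0 /\
    z = (map_poly ratr p).[x] / (map_poly ratr q).[x].

(* finite sums sum_j a_j x^j with a_j in {-1,0,1} = evaluations of
   integer polynomials with coefficients in {-1,0,1} *)
Definition pm1_poly (p : {poly int}) : bool := all (fun c => c \in [:: -1; 0; 1]) p.

Definition Spm1_generator (A : algC -> Prop) (X : algC) : Prop :=
  A X /\ forall z, A z -> exists! p : {poly int}, pm1_poly p /\ z = zev p X.

Definition imag_quadratic (X : algC) : Prop :=
  X \isn't Num.real /\ exists a b : rat, X ^+ 2 + ratr a * X + ratr b = 0.

Definition same_field (x y : algC) : Prop := forall z, Qadj x z <-> Qadj y z.

Definition ring_of_integers (x : algC) (z : algC) : Prop := Qadj x z /\ z \in Aint.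

From HB Require Import structures.
From mathcomp Require Import all_boot all_order all_algebra all_field.
From mathcomp Require Import ring lra zify.
Set Implicit Arguments.
Unset Strict Implicit.
Unset Printing Implicit Defensive.

Import Order.TTheory GRing.Theory Num.Theory.
Local Open Scope ring_scope.

(* If X generates Z[X] with signed digits, the expansion of 2 has a leading
   digit +-1, so X is an algebraic integer and X^2 = tX - n with t, n in Z and
   t^2 < 4n.  Writing 2 = c + Xw, uniqueness of the expansion of 1 forces
   c = -1, so X divides 3 and n | 3; n = 1 would make X a unit, which again
   gives a second expansion of 1.  Hence n = 3, |t| <= 3 and
   (2X - t)^2 = t^2 - 12 is -3, -11, 4 (-2) or 4 (-3).
   Conversely, if X^2 = tX - 3 with |t| <= 2, then u + vX = c + Xw with c the
   balanced residue of u mod 3 and w of smaller norm u^2 + tuv + 3v^2, which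
   gives expansions; they are unique because the integers divisible by X in
   Z[X] are the multiples of 3.  The three generators satisfy this with
   t = 2, 0, 1. *)

Lemma zevC c x : zev c%:P x = c%:~R.
Proof. by rewrite /zev map_polyC hornerC. Qed.

Lemma zevX x : zev 'X x = x.
Proof. by rewrite /zev map_polyX hornerX. Qed.

Lemma zevD p q x : zev (p + q) x = zev p x + zev q x.
Proof. by rewrite /zev rmorphD hornerD. Qed.

Lemma zevB p q x : zev (p - q) x = zev p x - zev q x.
Proof. by rewrite /zev rmorphB hornerD hornerN. Qed.

Lemma zevMXaddC p c x : zev (p * 'X + c%:P) x = zev p x * x + c%:~R.
Proof. by rewrite zevD zevC /zev rmorphM /= map_polyX hornerMX. Qed.

Lemma Zadj_intr x k : Zadj x k%:~R.
Proof. by exists k%:P; rewrite zevC. Qed.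

Lemma coefMXaddC (p : {poly int}) c i : (p * 'X + c%:P)`_i = if i is j.+1 then p`_j else c.
Proof. by rewrite coefD coefMX coefC; case: i => [|i] /=; rewrite ?add0r ?addr0. Qed.

Lemma mem_pm1 (c : int) : (c \in [:: -1; 0; 1]) = (`|c| <= 1).
Proof. by rewrite !inE; apply/idP/idP; lia. Qed.

Lemma pm1_polyP (p : {poly int}) : reflect (forall i, `|p`_i| <= 1) (pm1_poly p).
Proof.
apply: (iffP allP) => [p_pm1 i | p_pm1 c /(nthP 0) [i _ <-]]; last by rewrite mem_pm1.
have [lt_i|ge_i] := ltnP i (size p); last by rewrite nth_default.
by rewrite -mem_pm1 p_pm1 ?mem_nth.
Qed.

Lemma pm1_polyMXaddC (p : {poly int}) c : pm1_poly (p * 'X + c%:P) = (`|c| <= 1) && pm1_poly p.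
Proof.
apply/pm1_polyP/andP => [pc_pm1 | [c_pm1 /pm1_polyP p_pm1] [|i]]; rewrite ?coefMXaddC //.
by split; [have := pc_pm1 0%N | apply/pm1_polyP => i; have := pc_pm1 i.+1]; rewrite coefMXaddC.
Qed.

Lemma pm1_polyC c : `|c| <= 1 -> pm1_poly c%:P.
Proof.
by move=> c_pm1; rewrite -[c%:P]add0r -(mul0r 'X) pm1_polyMXaddC c_pm1 /pm1_poly polyseq0.
Qed.

Section ExpansionUniq.
Variable X : algC.
Hypothesis X_neq0 : X != 0.
Hypothesis X_ndvd_small : forall (w : {poly int}) (k : int), 0 < `|k| <= 2 -> X * zev w X != k%:~R.

Lemma zev_small_eq0 (r : {poly int}) : (forall i, `|r`_i| <= 2) -> zev r X = 0 -> r = 0.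
Proof.
elim/poly_ind: r => // r c IH r_small; rewrite zevMXaddC => /eqP.
rewrite addr_eq0 => /eqP rX.
have [c0|cn0] := eqVneq c 0; last first.
  have small_c : 0 < `|- c| <= 2 by have := r_small 0%N; rewrite coefMXaddC; lia.
  by have := X_ndvd_small r small_c; rewrite mulrC rX rmorphN eqxx.
move: rX; rewrite c0 oppr0 => /eqP; rewrite mulf_eq0 (negbTE X_neq0) orbF => /eqP r0.
by rewrite (IH _ r0) ?mul0r ?add0r // => i; have := r_small i.+1; rewrite coefMXaddC.
Qed.

Lemma pm1_expansion_uniq (p q : {poly int}) :
  pm1_poly p -> pm1_poly q -> zev p X = zev q X -> p = q.
Proof.
move=> /pm1_polyP p_pm1 /pm1_polyP q_pm1 pq; apply/eqP; rewrite -subr_eq0; apply/eqP.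
apply: zev_small_eq0 => [i|]; last by rewrite zevB pq subrr.
by rewrite coefB (le_trans (ler_normB _ _)) // (le_trans (lerD (p_pm1 i) (q_pm1 i))).
Qed.

End ExpansionUniq.

Lemma nonreal_intr_coords_eq0 (x : algC) (u v : int) : x \isn't Num.real ->
  u%:~R + v%:~R * x = 0 -> u = 0 /\ v = 0.
Proof.
move=> xNR uvx; have v0 : v = 0.
  apply/eqP; apply: contraNT xNR => vn0.
  have vx : v%:~R * x = - u%:~R by apply/eqP; rewrite -addr_eq0 addrC uvx.
  have -> : x = - u%:~R / v%:~R by rewrite -vx; field; rewrite intr_eq0.
  by rewrite rpredM ?rpredN ?rpredV ?realz.
by move: uvx; rewrite v0 mul0r addr0 => /eqP; rewrite intr_eq0 => /eqP.
Qed.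

Section IntegralQuadratic.
Variables (X : algC) (t n : int).
Hypothesis X_sqr : X ^+ 2 = t%:~R * X - n%:~R.

Lemma zev_coords (p : {poly int}) : exists u v : int, zev p X = u%:~R + v%:~R * X.
Proof.
elim/poly_ind: p => [|p c [u [v pX]]].
  by exists 0, 0; rewrite /zev rmorph0 horner0 mul0r addr0.
exists (c - v * n), (u + v * t); rewrite zevMXaddC pX mulrDl -mulrA -expr2 X_sqr.
by rewrite rmorphB !rmorphD !rmorphM /=; ring.
Qed.

Lemma Zadj_coordsP z : Zadj X z <-> exists u v : int, z = u%:~R + v%:~R * X.
Proof.
split=> [[p ->]|[u [v ->]]]; first exact: zev_coords.
by exists (v%:P * 'X + u%:P); rewrite zevMXaddC zevC addrC mulrC.
Qed.

Hypothesis X_nonreal : X \isn't Num.real.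

Lemma Zadj_mulX_dvdz w k : Zadj X w -> X * w = k%:~R -> (n %| k)%Z.
Proof.
move=> /Zadj_coordsP [u [v ->]] Xw; apply/dvdzP; exists (- v).
have : (- v * n - k)%:~R + (u + v * t)%:~R * X = 0 :> algC.
  rewrite rmorphB !rmorphD !rmorphM rmorphN /= -Xw mulrDr mulrCA -expr2 X_sqr; ring.
by case/nonreal_intr_coords_eq0 => // /eqP; rewrite subr_eq0 => /eqP.
Qed.

End IntegralQuadratic.

Lemma int_mod3_pm1 (u : int) : exists k c : int, `|c| <= 1 /\ u = 3 * k + c.
Proof.
exists ((u + 1) %/ 3)%Z, (u - 3 * ((u + 1) %/ 3)%Z); split; last by ring.
by have := divz_eq (u + 1) 3; have := modz_ge0 (u + 1) (isT : 3 != 0 :> int);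
  have := ltz_pmod (u + 1) (isT : 0 < 3 :> int); lia.
Qed.

Lemma mul_succ_ge0 (x : int) : 0 <= x * (x + 1).
Proof. by have [x_ge0|x_lt0] := lerP 0 x; nia. Qed.

Section SignedDigitQuadratic.
Variables (X : algC) (t : int).
Hypotheses (X_nonreal : X \isn't Num.real) (X_sqr : X ^+ 2 = t%:~R * X - 3%:~R).
Hypothesis t_small : `|t| <= 2.

(* The norm (u + vX)(u + vX^* ), as X + X^* = t and X X^* = 3. *)
Definition qnorm (u v : int) := u * u + t * u * v + 3 * (v * v).

Lemma qnorm_ge0 u v : 0 <= qnorm u v.
Proof.
have := sqr_ge0 (2 * u + t * v); rewrite expr2.
have : 0 <= (12 - t * t) * (v * v) by apply: mulr_ge0; [nia | rewrite -expr2 sqr_ge0].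
by rewrite /qnorm; nia.
Qed.

Lemma qnorm_descent k v c : `|c| <= 1 -> (k != 0) || (v != 0) ->
  qnorm (t * k + v) (- k) < qnorm (3 * k + c) v.
Proof.
(* For z = 3k + c + vX the left side is |z - c|^2 / 3 <= (|z| + 1)^2 / 3, which is
   below |z|^2 once |z|^2 >= 2, and for |t| <= 2 only digits have norm 0 or 1.
   Over Z this is a case analysis on t and c, with the hints x (x + 1) >= 0. *)
move=> c_pm1 kv_neq0.
have -> : qnorm (t * k + v) (- k) = v * v + t * k * v + 3 * (k * k) by rewrite /qnorm; ring.
rewrite /qnorm.
have := mul_succ_ge0 k; have := mul_succ_ge0 (- k).
have := mul_succ_ge0 v; have := mul_succ_ge0 (- v).
have := mul_succ_ge0 (k + v); have := mul_succ_ge0 (- (k + v)).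
have := mul_succ_ge0 (k - v); have := mul_succ_ge0 (v - k).
have : t = -2 \/ t = -1 \/ t = 0 \/ t = 1 \/ t = 2 by lia.
have : c = -1 \/ c = 0 \/ c = 1 by lia.
by case=> [->|[->|->]]; case=> [->|[->|[->|[->|->]]]]; nia.
Qed.

Lemma pm1_expansion_exists u v : exists p, pm1_poly p /\ u%:~R + v%:~R * X = zev p X.
Proof.
(* With u = 3k + c, X (t - X) = 3 gives u + vX = c + X ((tk + v) - kX). *)
have [m] := ubnP (absz (qnorm u v)); elim: m u v => // m IH u v.
have [k [c [c_pm1 ->]]] := int_mod3_pm1 u; rewrite ltnS => le_m.
have [/andP[/eqP k0 /eqP v0]|] := boolP ((k == 0) && (v == 0)).
  by exists c%:P; rewrite pm1_polyC // zevC k0 v0 mulr0 add0r mul0r addr0.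
rewrite negb_and => kv_neq0.
have [|p [p_pm1 pX]] := IH (t * k + v) (- k).
  have := qnorm_ge0 (t * k + v) (- k); have := qnorm_descent c_pm1 kv_neq0; lia.
exists (p * 'X + c%:P); rewrite pm1_polyMXaddC c_pm1 p_pm1; split=> //.
have -> : zev (p * 'X + c%:P) X = v%:~R * X - k%:~R * (X ^+ 2 - t%:~R * X) + c%:~R.
  by rewrite zevMXaddC -pX rmorphD rmorphM rmorphN /=; ring.
by rewrite X_sqr !rmorphD !rmorphM /=; ring.
Qed.

Lemma Spm1_generator_quadratic (A : algC -> Prop) :
  (forall z, A z <-> exists u v : int, z = u%:~R + v%:~R * X) -> Spm1_generator A X.
Proof.
move=> A_coords; split; first by apply/A_coords; exists 0, 1; rewrite add0r mul1r.
move=> z /A_coords [u [v ->]].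
have [p [p_pm1 pX]] := pm1_expansion_exists u v.
exists p; split=> // q [q_pm1 qX]; apply: (@pm1_expansion_uniq X) => //.
- by apply: contraNneq X_nonreal => ->; exact: real0.
- move=> w k k_small; apply/eqP => Xw.
  by have := Zadj_mulX_dvdz X_sqr X_nonreal (ex_intro _ w erefl) Xw; lia.
- by rewrite -pX -qX.
Qed.

End SignedDigitQuadratic.

Lemma sqrtC_nonreal (x : algC) : x < 0 -> sqrtC x \isn't Num.real.
Proof. by move=> x_lt0; rewrite realEsqr sqrtCK; apply: contraTN x_lt0 => /le_gtF ->. Qed.

Lemma conj_nonreal_sqr (x : algC) : x ^+ 2 \is Num.real -> x \isn't Num.real -> x^* = - x.
Proof.
move=> x2R xNR; apply/eqP; rewrite -addr_eq0.
have : (x^* - x) * (x^* + x) = (x ^+ 2)^* - x ^+ 2 by rewrite rmorphXn; ring.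
rewrite (conj_Creal x2R) subrr.
by move/eqP; rewrite mulf_eq0 subr_eq0 -CrealE (negbTE xNR).
Qed.

Lemma Aint_root_int_poly (x : algC) (p : {poly int}) :
  zev p x = 0 -> `|lead_coef p| = 1 -> x \in Aint.
Proof.
move=> px0 lead_p; pose q := lead_coef p *: p.
have q_monic : q \is monic.
  by rewrite monicE lead_coefZ; have [->|->] : lead_coef p = 1 \/ lead_coef p = -1 by lia.
apply: (@root_monic_Aint (map_poly intr q)); last first.
- by apply/polyOverP => i; rewrite coef_map intr_int.
- exact: monic_map.
by rewrite /root linearZ /= hornerZ -/(zev p x) px0 mulr0.
Qed.

Lemma Aint_root_quadratic (x : algC) (a b : int) :
  x ^+ 2 + a%:~R * x + b%:~R = 0 -> x \in Aint.
Proof.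
move=> x_root; apply: (@Aint_root_int_poly _ (('X + a%:P) * 'X + b%:P)).
  by rewrite zevMXaddC zevD zevX zevC mulrDl -expr2 x_root.
rewrite lead_coefDl ?lead_coefMX ?lead_coefXaddC //.
by rewrite size_polyC size_mulX ?size_XaddC ?monic_neq0 ?monicXaddC //; case: (_ != 0).
Qed.

Lemma Qadj_affine (x y : algC) (a b : rat) z : x = ratr a + ratr b * y -> Qadj x z -> Qadj y z.
Proof.
move=> xy [p [q [qx0 ->]]]; pose r := a%:P + b%:P * 'X.
have xr : x = (map_poly ratr r).[y].
  by rewrite xy rmorphD rmorphM /= !map_polyC map_polyX hornerD hornerM !hornerC hornerX.
by exists (p \Po r), (q \Po r); rewrite !map_comp_poly !horner_comp -xr.
Qed.

Lemma same_field_affine (x y : algC) (a b : rat) : b != 0 ->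
  x = ratr a + ratr b * y -> same_field x y.
Proof.
move=> b_neq0 xy z; split; first exact: Qadj_affine xy.
apply: (@Qadj_affine _ _ (- a / b) b^-1).
have rb_neq0 : ratr b != 0 :> algC by rewrite fmorph_eq0.
by rewrite xy fmorph_div fmorphV rmorphN /=; field.
Qed.

Lemma same_field_lin (X s : algC) (t b : int) : b != 0 ->
  2 * X - t%:~R - b%:~R * s = 0 -> same_field X s.
Proof.
move=> b_neq0 e; apply: (@same_field_affine _ _ (t%:~R / 2) (b%:~R / 2)).
  by rewrite mulf_neq0 ?intr_eq0 ?invr_eq0 ?pnatr_eq0.
rewrite !fmorph_div /= !ratr_int rmorph_nat.
transitivity ((2 * X - t%:~R - b%:~R * s) / 2 + (t%:~R / 2 + b%:~R / 2 * s)); first by field.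
by rewrite e mul0r add0r.
Qed.

Lemma same_field_sqrtC (X : algC) (t m d : int) : m != 0 ->
  (2 * X - t%:~R) ^+ 2 = (m * m * d)%:~R -> same_field X (sqrtC d%:~R).
Proof.
move=> m_neq0 X_sqr.
have : (2 * X - t%:~R - m%:~R * sqrtC d%:~R) * (2 * X - t%:~R + m%:~R * sqrtC d%:~R) = 0.
  by rewrite -subr_sqr X_sqr exprMn sqrtCK !rmorphM /=; ring.
move/eqP; rewrite mulf_eq0 => /orP[] /eqP e; first exact: (same_field_lin m_neq0 e).
by apply: (@same_field_lin _ _ t (- m)); rewrite ?oppr_eq0 // rmorphN mulNr opprK e.
Qed.

Lemma norm_form_eq0 (R : realFieldType) (c u v : R) :
  c < 0 -> u * u - c * (v * v) = 0 -> u = 0 /\ v = 0.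
Proof.
move=> c_lt0 N0; have /eqP : u * u = 0 by nra.
have /eqP : v * v = 0 by nra.
by rewrite !mulf_eq0 !orbb => /eqP -> /eqP ->.
Qed.

Section ImaginaryQuadraticField.
Variables (s : algC) (c : rat).
Hypotheses (s_sqr : s ^+ 2 = ratr c) (c_lt0 : c < 0).

Lemma ratr_horner_coords (p : {poly rat}) :
  exists u v : rat, (map_poly ratr p).[s] = ratr u + ratr v * s.
Proof.
elim/poly_ind: p => [|p a [u [v ps]]].
  by exists 0, 0; rewrite rmorph0 horner0 !rmorph0 mul0r addr0.
exists (v * c + a), u.
rewrite rmorphD rmorphM /= map_polyX map_polyC hornerMXaddC ps !rmorphD rmorphM /= -s_sqr.
by ring.
Qed.

Lemma coords_inv (u v : rat) : let N := u * u - c * (v * v) in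
  (ratr u + ratr v * s)^-1 = ratr (u / N) - ratr (v / N) * s.
Proof.
move=> N; have [N0|N_neq0] := eqVneq N 0.
  have [-> ->] := norm_form_eq0 c_lt0 N0.
  by rewrite !mul0r !rmorph0 mul0r addr0 subr0 invr0.
have ratr_N : (ratr u + ratr v * s) * (ratr u - ratr v * s) = ratr N.
  by rewrite rmorphB !rmorphM /= -s_sqr; ring.
have rN_neq0 : ratr N != 0 :> algC by rewrite fmorph_eq0.
have [a_neq0 b_neq0] : ratr u + ratr v * s != 0 /\ ratr u - ratr v * s != 0.
  by apply/andP; rewrite -negb_or -mulf_eq0 ratr_N.
rewrite !fmorph_div /= -ratr_N; field.
by rewrite a_neq0 b_neq0.
Qed.

Lemma Qadj_coordsP z : Qadj s z <-> exists u v : rat, z = ratr u + ratr v * s.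
Proof.
split=> [[p [q [_ ->]]] | [u [v ->]]].
  have [u1 [v1 ->]] := ratr_horner_coords p; have [u2 [v2 ->]] := ratr_horner_coords q.
  rewrite coords_inv; set u3 := u2 / _; set v3 := v2 / _.
  exists (u1 * u3 - c * (v1 * v3)), (v1 * u3 - u1 * v3).
  by rewrite !rmorphB !rmorphM /= -s_sqr; ring.
exists (u%:P + v%:P * 'X), 1; rewrite rmorph1 hornerC divr1 oner_neq0; split=> //.
by rewrite rmorphD rmorphM /= !map_polyC map_polyX hornerD hornerM !hornerC hornerX.
Qed.

End ImaginaryQuadraticField.

Lemma Cint_Crat_sqr (y : algC) (k : int) : y \in Crat -> y ^+ 2 = k%:~R -> y \in Num.int.
Proof.
move=> y_rat y_sqr; apply: Cint_rat_Aint => //.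
by apply: (@Aint_root_quadratic _ 0 (- k)); rewrite y_sqr mul0r addr0 rmorphN subrr.
Qed.

Lemma Cint_prime_mul_sqr (d : nat) (r : algC) (k : int) : prime d -> r \in Crat ->
  d%:R * r ^+ 2 = k%:~R -> r \in Num.int.
Proof.
move=> d_prime r_rat dr_sqr; have d_neq0 : d%:R != 0 :> algC by rewrite pnatr_eq0 -lt0n prime_gt0.
have /intrP [y ey] : d%:R * r \in Num.int.
  apply: (@Cint_Crat_sqr _ (d%:Z * k)); first by rewrite rpredM ?rpred_nat.
  by rewrite rmorphM /= -pmulrn -dr_sqr; ring.
have y_sqr : y * y = d%:Z * k.
  by apply: (@intr_inj algC); rewrite !rmorphM /= -ey -pmulrn -dr_sqr; ring.
have /dvdzP [v y_eq] : (d%:Z %| y)%Z.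
  have : (d%:Z %| y * y)%Z by rewrite y_sqr dvdz_mulr.
  by rewrite !dvdzE abszM Euclid_dvdM // orbb.
have -> : r = v%:~R by apply: (mulfI d_neq0); rewrite ey y_eq rmorphM /= -pmulrn mulrC.
exact: intr_int.
Qed.

Section RingOfIntegers.
Variable d : nat.
Hypothesis d_prime : prime d.
Let s := sqrtC (- d%:R) : algC.

Let s_sqr : s ^+ 2 = ratr (- d%:R).
Proof. by rewrite sqrtCK rmorphN rmorph_nat. Qed.

Let d_neg : - d%:R < 0 :> rat.
Proof. by rewrite oppr_lt0 ltr0n prime_gt0. Qed.

Lemma ring_of_integers_sqrtC_coords (u v : rat) : ratr u + ratr v * s \in Aint ->
  exists A V : int, 2 * (ratr u + ratr v * s) = A%:~R + V%:~R * s /\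
    (4 %| A * A + d%:Z * (V * V))%Z.
Proof.
set z := _ + _ => z_Aint.
have s_conj : s^* = - s.
  apply: conj_nonreal_sqr; first by rewrite s_sqr Creal_Crat ?Crat_rat.
  by apply: sqrtC_nonreal; rewrite oppr_lt0 ltr0n prime_gt0.
have z_conj : z^* = ratr u - ratr v * s.
  by rewrite /z rmorphD (rmorphM _ (ratr v) s) /= s_conj !conj_Crat ?Crat_rat // mulrN.
have zc_Aint : z^* \in Aint by rewrite Aint_aut.
have /intrP [A eA] : ratr (2 * u) \in @Num.int algC.
  apply: Cint_rat_Aint; first exact: Crat_rat.
  have -> : ratr (2 * u) = z + z^* by rewrite z_conj /z rmorphM rmorph_nat; ring.
  exact: rpredD.
have /intrP [M eM] : ratr (u ^+ 2 + d%:R * v ^+ 2) \in @Num.int algC.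
  apply: Cint_rat_Aint; first exact: Crat_rat.
  have -> : ratr (u ^+ 2 + d%:R * v ^+ 2) = z * z^*.
    rewrite z_conj /z; transitivity (ratr u ^+ 2 - ratr v ^+ 2 * s ^+ 2); last by ring.
    by rewrite s_sqr rmorphD rmorphM !rmorphXn rmorphN rmorph_nat; ring.
  exact: rpredM.
have /intrP [V eV] : ratr (2 * v) \in @Num.int algC.
  apply: (@Cint_prime_mul_sqr d _ (4 * M - A * A)) => //; first exact: Crat_rat.
  by rewrite rmorphB !rmorphM /= -eA -eM !rmorph_nat rmorphD rmorphM !rmorphXn rmorph_nat; ring.
exists A, V; split; first by rewrite -eA -eV /z !rmorphM rmorph_nat; ring.
apply/dvdzP; exists M; apply: (@intr_inj algC).
by rewrite !rmorphD !rmorphM /= -eA -eV -eM -pmulrn rmorphD rmorphM !rmorph_nat !rmorphXn; ring.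
Qed.

Lemma ring_of_integers_sqrtCP z : ring_of_integers s z <->
  exists A V : int, 2 * z = A%:~R + V%:~R * s /\ (4 %| A * A + d%:Z * (V * V))%Z.
Proof.
split=> [[/(Qadj_coordsP s_sqr d_neg) [u [v ->]] z_Aint] | [A [V [zAV /dvdzP [M AV_M]]]]].
  exact: ring_of_integers_sqrtC_coords.
have two_neq0 : 2 != 0 :> algC by rewrite pnatr_eq0.
split.
  apply/(Qadj_coordsP s_sqr d_neg); exists (A%:~R / 2), (V%:~R / 2).
  by apply: (mulfI two_neq0); rewrite zAV !fmorph_div /= !ratr_int rmorph_nat; field.
apply: (@Aint_root_quadratic _ (- A) M); apply: (mulfI (mulf_neq0 two_neq0 two_neq0)).
rewrite mulr0; transitivity ((2 * z) ^+ 2 - 2 * A%:~R * (2 * z) + (M * 4)%:~R).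
  by rewrite rmorphN rmorphM /=; ring.
rewrite -AV_M zAV !rmorphD !rmorphM /= -pmulrn.
transitivity (V%:~R ^+ 2 * (s ^+ 2 + d%:R)); first by ring.
by rewrite s_sqr rmorphN rmorph_nat addNr mulr0.
Qed.

End RingOfIntegers.

Lemma int_even_odd (a : int) : exists b, a = 2 * b \/ a = 2 * b + 1.
Proof.
exists (a %/ 2)%Z; have := divz_eq a 2.
by have := modz_ge0 a (isT : 2 != 0 :> int); have := ltz_pmod a (isT : 0 < 2 :> int); lia.
Qed.

Lemma Zadj_sqrtCm2_ring_of_integers z :
  Zadj (sqrtC (-2)) z <-> ring_of_integers (sqrtC (-2)) z.
Proof.
have s_sqr : sqrtC (-2 : algC) ^+ 2 = 0%:~R * sqrtC (-2) - 2%:~R by rewrite sqrtCK mul0r add0r.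
split=> [/(Zadj_coordsP s_sqr) [u [v ->]] |
         /(ring_of_integers_sqrtCP (d := 2) isT) [A [V [zAV dvd4]]]].
  apply/(ring_of_integers_sqrtCP (d := 2) isT); exists (2 * u), (2 * v); split.
    by rewrite !rmorphM /=; ring.
  by apply/dvdzP; exists (u * u + 2 * (v * v)); ring.
apply/(Zadj_coordsP s_sqr).
have [a [A_eq|A_eq]] := int_even_odd A; have [b [V_eq|V_eq]] := int_even_odd V;
  rewrite {}A_eq {}V_eq in zAV dvd4; try by exfalso; lia.
exists a, b; apply: (@mulfI _ 2); first by rewrite pnatr_eq0.
by rewrite zAV !rmorphM /=; ring.
Qed.

Lemma ring_of_integers_sqrtCm11P z : ring_of_integers (sqrtC (-11)) z <->
  exists u v : int, z = u%:~R + v%:~R * ((1 + sqrtC (-11)) / 2).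
Proof.
have two_neq0 : 2 != 0 :> algC by rewrite pnatr_eq0.
split=> [/(ring_of_integers_sqrtCP (d := 11) isT) [A [V [zAV dvd4]]] | [u [v ->]]].
  have [c [AV_eq|AV_eq]] := int_even_odd (A - V); last first.
    have A_eq : A = V + 2 * c + 1 by lia.
    by exfalso; rewrite A_eq in dvd4; lia.
  exists c, V; apply: (mulfI two_neq0); rewrite zAV.
  have -> : A = 2 * c + V by lia.
  by rewrite !rmorphD !rmorphM /=; field.
apply/(ring_of_integers_sqrtCP (d := 11) isT); exists (2 * u + v), v; split.
  by rewrite !rmorphD !rmorphM /=; field.
by apply/dvdzP; exists (u * u + u * v + 3 * (v * v)); ring.
Qed.

Lemma Spm1_generator_sqrtCm3 : Spm1_generator (Zadj (sqrtC (-3))) (sqrtC (-3)).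
Proof.
have s_sqr : sqrtC (-3 : algC) ^+ 2 = 0%:~R * sqrtC (-3) - 3%:~R by rewrite sqrtCK mul0r add0r.
apply: (Spm1_generator_quadratic _ s_sqr) => //; last exact: Zadj_coordsP s_sqr.
by apply: sqrtC_nonreal; rewrite oppr_lt0 ltr0n.
Qed.

Lemma Spm1_generator_1_sqrtCm2 : Spm1_generator (Zadj (sqrtC (-2))) (1 + sqrtC (-2)).
Proof.
have s_sqr : sqrtC (-2 : algC) ^+ 2 = 0%:~R * sqrtC (-2) - 2%:~R by rewrite sqrtCK mul0r add0r.
apply: (@Spm1_generator_quadratic _ 2) => //.
- apply: contraNN (@sqrtC_nonreal (-2) _) => [X_real|]; last by rewrite oppr_lt0 ltr0n.
  by rewrite -[sqrtC _](addKr 1) rpredD ?rpredN ?real1.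
- apply/eqP; rewrite -subr_eq0; apply/eqP; transitivity (sqrtC (-2 : algC) ^+ 2 + 2); first by ring.
  by rewrite sqrtCK addNr.
move=> z; rewrite (Zadj_coordsP s_sqr).
split=> [[u [v ->]] | [u [v ->]]]; first by exists (u - v), v; rewrite rmorphB /=; ring.
by exists (u + v), v; rewrite rmorphD /=; ring.
Qed.

Lemma Spm1_generator_half_1_sqrtCm11 :
  Spm1_generator (ring_of_integers (sqrtC (-11))) ((1 + sqrtC (-11)) / 2).
Proof.
apply: (@Spm1_generator_quadratic _ 1) => //; last exact: ring_of_integers_sqrtCm11P.
- apply: contraNN (@sqrtC_nonreal (-11) _) => [X_real|]; last by rewrite oppr_lt0 ltr0n.
  have -> : sqrtC (-11 : algC) = 2 * ((1 + sqrtC (-11)) / 2) - 1 by field.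
  by rewrite realB // realM.
apply/eqP; rewrite -subr_eq0; apply/eqP.
transitivity ((sqrtC (-11 : algC) ^+ 2 + 11) / 4); first by field.
by rewrite sqrtCK addNr mul0r.
Qed.

Lemma imag_quadratic_conj (X : algC) (a b : rat) : X \isn't Num.real ->
  X ^+ 2 + ratr a * X + ratr b = 0 -> X + X^* = - ratr a /\ X * X^* = ratr b.
Proof.
move=> XNR X_root.
have Xc_root : X^* ^+ 2 + ratr a * X^* + ratr b = 0.
  rewrite -(conj_Crat (Crat_rat a)) -(conj_Crat (Crat_rat b)).
  by rewrite -rmorphXn -rmorphM -!rmorphD X_root rmorph0.
have X_sum : X + X^* = - ratr a.
  have /eqP : (X - X^*) * (X + X^* + ratr a) = 0.
    by rewrite -(subrr 0) -{1}X_root -Xc_root; ring.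
  by rewrite mulf_eq0 subr_eq0 eq_sym -CrealE (negbTE XNR) addr_eq0 => /eqP.
split=> //; have -> : X^* = - ratr a - X by rewrite -X_sum; ring.
by rewrite -[RHS]subr0 -X_root; ring.
Qed.

Lemma imag_quadratic_Aint_sqr (X : algC) : imag_quadratic X -> X \in Aint ->
  exists t n : int, X ^+ 2 = t%:~R * X - n%:~R.
Proof.
move=> [XNR [a [b X_root]]] X_Aint.
have [X_sum X_prod] := imag_quadratic_conj XNR X_root.
have Xc_Aint : X^* \in Aint by rewrite Aint_aut.
have /intrP [t et] : X + X^* \in Num.int.
  by apply: Cint_rat_Aint; [rewrite X_sum rpredN Crat_rat | exact: rpredD].
have /intrP [n en] : X * X^* \in Num.int.
  by apply: Cint_rat_Aint; [rewrite X_prod Crat_rat | exact: rpredM].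
by exists t, n; rewrite -et -en; ring.
Qed.

Lemma sqr_completion (X : algC) (t n : int) : X ^+ 2 = t%:~R * X - n%:~R ->
  (2 * X - t%:~R) ^+ 2 = (t * t - 4 * n)%:~R.
Proof.
move=> X_sqr; rewrite rmorphB !rmorphM /=.
by transitivity (4 * X ^+ 2 - 4 * t%:~R * X + t%:~R ^+ 2); [ring | rewrite X_sqr; ring].
Qed.

Lemma nonreal_sqr_disc (X : algC) (t n : int) : X \isn't Num.real ->
  X ^+ 2 = t%:~R * X - n%:~R -> t * t < 4 * n.
Proof.
move=> XNR X_sqr; rewrite ltNge; apply: contraNN XNR => disc_ge0.
have -> : X = ((2 * X - t%:~R) + t%:~R) / 2 by field.
rewrite realM ?realV ?realn // realD ?realz // realEsqr (sqr_completion X_sqr) ler0z.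
by lia.
Qed.

Section Necessity.
Variable X : algC.
Hypothesis X_gen : Spm1_generator (Zadj X) X.

Lemma Spm1_generator_head z : Zadj X z ->
  exists c w, `|c| <= 1 /\ Zadj X w /\ z = c%:~R + X * w.
Proof.
move=> /X_gen.2 [p [[p_pm1 ->] _]].
elim/poly_ind: p p_pm1 => [_|p c _].
  exists 0, 0; split=> //; split; first exact: Zadj_intr 0.
  by rewrite /zev rmorph0 horner0 mulr0 addr0.
rewrite pm1_polyMXaddC => /andP[c_pm1 p_pm1]; exists c, (zev p X); split=> //; split.
  by exists p.
by rewrite zevMXaddC addrC mulrC.
Qed.

Lemma Spm1_generator_head_one (c : int) w : `|c| <= 1 -> Zadj X w -> c%:~R + X * w = 1 -> c = 1.
Proof.
move=> c_pm1 /X_gen.2 [q [[q_pm1 ->] _]] cqX.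
have [p [_ p_uniq]] := X_gen.2 _ (Zadj_intr X 1).
have p_cq : p = q * 'X + c%:P.
  by apply: p_uniq; rewrite pm1_polyMXaddC c_pm1 q_pm1 zevMXaddC addrC mulrC cqX.
have p_1 : p = 1%:P by apply: p_uniq; rewrite pm1_polyC // zevC.
by move/(congr1 (fun r : {poly int} => r`_0)): p_1; rewrite p_cq coefMXaddC coefC.
Qed.

Lemma Spm1_generator_dvd3 : exists2 w, Zadj X w & X * w = 3%:~R.
Proof.
(* In 2 = c + Xw, a digit c >= 0 would make (c - 1) + Xw an expansion of 1. *)
have [c [w [c_pm1 [Zw two]]]] := Spm1_generator_head (Zadj_intr X 2).
have Xw : X * w = 2%:~R - c%:~R by rewrite two; ring.
exists w => //; have [c_m1|c1_pm1] : c = -1 \/ `|c - 1| <= 1 by lia.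
  by rewrite Xw c_m1; ring.
have := Spm1_generator_head_one c1_pm1 Zw.
have -> : (c - 1)%:~R + X * w = 1 by rewrite Xw rmorphB /=; ring.
by move=> /(_ erefl); lia.
Qed.

Lemma Spm1_generator_Aint : X \in Aint.
Proof.
have [p [[/pm1_polyP p_pm1 two] _]] := X_gen.2 _ (Zadj_intr X 2).
have size_p : (1 < size p)%N.
  rewrite ltnNge; apply/negP => /size1_polyC p_eq.
  by have := p_pm1 0%N; move: two; rewrite p_eq zevC coefC => /intr_inj <-.
apply: (@Aint_root_int_poly _ (p - 2%:P)); first by rewrite zevB zevC two subrr.
rewrite lead_coefDl ?size_polyN; last exact: leq_ltn_trans (size_polyC_leq1 _) size_p.
have : lead_coef p != 0 by rewrite lead_coef_eq0 -size_poly_gt0 ltnW.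
by have := p_pm1 (size p).-1; rewrite lead_coefE; lia.
Qed.

Lemma Spm1_generator_norm3 (t n : int) : X \isn't Num.real ->
  X ^+ 2 = t%:~R * X - n%:~R -> n = 3.
Proof.
move=> XNR X_sqr; have disc := nonreal_sqr_disc XNR X_sqr.
have [w Zw Xw] := Spm1_generator_dvd3.
have /dvdzP [q n_dvd3] := Zadj_mulX_dvdz X_sqr XNR Zw Xw.
have n_gt0 : 0 < n by have := sqr_ge0 t; rewrite expr2; lia.
have q_gt0 : 0 < q by nia.
have n_le3 : n <= 3 by nia.
have [n1|//] : n = 1 \/ n = 3.
  by have [n2|] := eqVneq n 2; [rewrite n2 in n_dvd3 | ]; lia.
have Z_tX : Zadj X (t%:~R - X) by apply/(Zadj_coordsP X_sqr); exists t, (-1); rewrite mulN1r.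
have := Spm1_generator_head_one (c := 0) isT Z_tX.
have -> : 0%:~R + X * (t%:~R - X) = 1 by rewrite mulrBr -expr2 X_sqr n1; ring.
by move=> /(_ erefl).
Qed.

End Necessity.

Theorem Spm1_generator_imag_quadratic_field (X : algC) :
  imag_quadratic X -> Spm1_generator (Zadj X) X ->
  same_field X (sqrtC (-2)) \/ same_field X (sqrtC (-3)) \/ same_field X (sqrtC (-11)).
Proof.
move=> X_quad X_gen; have XNR := X_quad.1.
have [t [n X_sqr]] := imag_quadratic_Aint_sqr X_quad (Spm1_generator_Aint X_gen).
have disc := nonreal_sqr_disc XNR X_sqr.
have n3 := Spm1_generator_norm3 X_gen XNR X_sqr.
have := sqr_completion X_sqr; rewrite n3 => X_compl.
have : t = -3 \/ t = -2 \/ t = -1 \/ t = 0 \/ t = 1 \/ t = 2 \/ t = 3 by nia.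
case=> [|[|[|[|[|[|]]]]]] t_eq; rewrite t_eq in X_compl.
- by right; left; apply: (@same_field_sqrtC _ (-3) 1 (-3)); rewrite // X_compl.
- by left; apply: (@same_field_sqrtC _ (-2) 2 (-2)); rewrite // X_compl.
- by right; right; apply: (@same_field_sqrtC _ (-1) 1 (-11)); rewrite // X_compl.
- by right; left; apply: (@same_field_sqrtC _ 0 2 (-3)); rewrite // X_compl.
- by right; right; apply: (@same_field_sqrtC _ 1 1 (-11)); rewrite // X_compl.
- by left; apply: (@same_field_sqrtC _ 2 2 (-2)); rewrite // X_compl.
- by right; left; apply: (@same_field_sqrtC _ 3 1 (-3)); rewrite // X_compl.
Qed.

Theorem proposition6p5 :
  (forall X : algC, imag_quadratic X -> Spm1_generator (Zadj X) X ->
     same_field X (sqrtC (-2)) \/ same_field X (sqrtC (-3)) \/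
     same_field X (sqrtC (-11)))
  /\ (Spm1_generator (Zadj (sqrtC (-2))) (1 + sqrtC (-2))
      /\ (forall z, Zadj (sqrtC (-2)) z <-> ring_of_integers (sqrtC (-2)) z))
  /\ Spm1_generator (Zadj (sqrtC (-3))) (sqrtC (-3))
  /\ Spm1_generator (ring_of_integers (sqrtC (-11))) ((1 + sqrtC (-11)) / 2).
Proof.
split; first exact: Spm1_generator_imag_quadratic_field.
split; first by split; [exact: Spm1_generator_1_sqrtCm2 | exact: Zadj_sqrtCm2_ring_of_integers].
by split; [exact: Spm1_generator_sqrtCm3 | exact: Spm1_generator_half_1_sqrtCm11].
Qed.
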